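(* Let $R$ be an associative unital algebra over a field $k$, let $P(t)\in R[t]$ be a monic polynomial of degree $n$ ($t$ central), and let $S$ be a set of pseudo-roots of $P(t)$ containing elements $a_1,\dots,a_n$ with $P(t)=(t-a_1)(t-a_2)\cdots(t-a_n)$. Let $\Gamma=\Gamma(P,S)$ be the graph of right divisors and $\mathcal P(t)\in A(\Gamma)[t]$ the associated polynomial. Then there is a canonical algebra homomorphism $\alpha:A(\Gamma)\to R$, sending the edge from $(t-a)B(t)$ to $B(t)$ to $a$, such that the induced homomorphism $\hat\alpha:A(\Gamma)[t]\to R[t]$ maps $\mathcal P(t)$ to $P(t)$.
   Context: An element $x\in R$ is a pseudo-root of $P(t)$ if $P(t)=Q_1(t)(t-x)Q_2(t)$ for some $Q_1,Q_2\in R[t]$. The graph $\Gamma(P,S)$: its vertices are the monic polynomials $B(t)\in R[t]$ of degree between $0$ and $n$ such that $P(t)=Q(t)B(t)$ for some $Q(t)\in R[t]$; there is an edge from $B_1(t)$ to $B_2(t)$ (tail $B_1$, head $B_2$) whenever $B_1(t)=(t-x)B_2(t)$ for some $x\in S$. For a directed graph $\Gamma=(V,E)$ (each edge $e$ has tail $t(e)$ and head $h(e)$; a directed path is $e_1,\dots,e_k$ with $t(e_{i+1})=h(e_i)$), $A(\Gamma)$ is the quotient of the free associative $k$-algebra on $E$ by the relations that for any two directed paths $(e_1,\dots,e_k)$, $(e'_1,\dots,e'_l)$ with common origin and common terminus, $(t-e_1)\cdots(t-e_k)=(t-e'_1)\cdots(t-e'_l)$ coefficientwise. Here $\mathcal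 P(t)=(t-f_1)\cdots(t-f_m)\in A(\Gamma)[t]$ for any directed path $(f_1,\dots,f_m)$ in $\Gamma(P,S)$ from the vertex $P(t)$ to the vertex $1$ (such a path exists and $\mathcal P(t)$ does not depend on its choice). *)

From mathcomp Require Import all_boot all_algebra.
Set Implicit Arguments. Unset Strict Implicit. Unset Printing Implicit Defensive.
Import GRing.Theory.
Local Open Scope ring_scope.

Section Graph.
Variables (k : fieldType) (R : algType k) (P : {poly R}) (S : R -> Prop).

Definition pseudo_root (x : R) : Prop :=
  exists Q1 Q2 : {poly R}, P = Q1 * ('X - x%:P) * Q2.

(* Vertices of Gamma(P,S): monic right divisors of P of degree between 0 and
   deg P (size B = deg B + 1). *)
Definition gvertex (B : {poly R}) : Prop :=
  [/\ B \is monic, (size B <= size P)%N & exists Q : {poly R}, P = Q * B].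

Definition is_gedge (e : {poly R} * {poly R} * R) : Prop :=
  let: (B1, B2, x) := e in
  [/\ gvertex B1, gvertex B2, S x & B1 = ('X - x%:P) * B2].

Definition gedge := {e : {poly R} * {poly R} * R | is_gedge e}.

Definition etail (e : gedge) : {poly R} := (sval e).1.1.
Definition ehead (e : gedge) : {poly R} := (sval e).1.2.
Definition elabel (e : gedge) : R := (sval e).2.

Fixpoint dpath (u : {poly R}) (p : seq gedge) (v : {poly R}) : Prop :=
  match p with
  | [::] => u = v
  | e :: p' => etail e = u /\ dpath (ehead e) p' v
  end.

Definition path_poly (A : algType k) (f : gedge -> A) (p : seq gedge) : {poly A} :=
  \prod_(e <- p) ('X - (f e)%:P).

Definition gamma_relations (A : algType k) (f : gedge -> A) : Prop :=
  forall (u v : {poly R}) (p q : seq gedge),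
    dpath u p v -> dpath u q v -> path_poly f p = path_poly f q.

(* (A, iota) is the algebra A(Gamma) presented by generators E and the relations
   above, characterized up to unique isomorphism by its universal property:
   every assignment of the generators in a k-algebra B satisfying the relations
   extends to a unique k-algebra homomorphism A -> B. *)
Definition is_A_Gamma (A : algType k) (iota : gedge -> A) : Prop :=
  gamma_relations iota /\
  forall (B : algType k) (g : gedge -> B), gamma_relations g ->
    exists h : {lrmorphism A -> B},
      (forall e, h (iota e) = g e) /\
      (forall h' : {lrmorphism A -> B}, (forall e, h' (iota e) = g e) ->
         forall a, h' a = h a).

End Graph.

From mathcomp Require Import all_boot all_algebra.
Import GRing.Theory.
Local Open Scope ring_scope.

(* Reading the labels off a path from u to v factors u as
   (t - x_1) ... (t - x_m) v, with v monic as soon as the path is nonempty;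
   as monic polynomials are right regular, any two paths from u to v carry the
   same label polynomial, so the labelling satisfies the relations of A(Gamma)
   and the universal property yields alpha.  A path from P to 1 is obtained
   by peeling off the factors of P = (t - a_1) ... (t - a_n) one at a time. *)

Lemma map_poly_path_poly (k : fieldType) (R : algType k) (P : {poly R})
    (S : R -> Prop) (A B : algType k) (h : {lrmorphism A -> B})
    (f : gedge P S -> A) (p : seq (gedge P S)) :
  map_poly h (path_poly f p) = path_poly (h \o f) p.
Proof.
by rewrite /path_poly rmorph_prod; apply: eq_bigr => e _; rewrite /= map_polyXsubC.
Qed.

Section LabelledPaths.
Context {k : fieldType} {R : algType k} {P : {poly R}} {S : R -> Prop}.

Local Notation dpath := (@dpath k R P S).
Local Notation elabel := (@elabel k R P S).

Lemma dpath_factor {u p v} : dpath u p v -> u = path_poly elabel p * v.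
Proof.
elim: p u => [|e p IHp] u /= => [->|[<- /IHp head_e]].
  by rewrite /path_poly big_nil mul1r.
rewrite /path_poly big_cons -mulrA -head_e.
by case: e {head_e} => [[[B1 B2] x] He]; case: He.
Qed.

Lemma dpath_monic_or_nil {u p v} : dpath u p v -> v \is monic \/ p = [::].
Proof.
elim: p u => [|e p IHp] u /=; first by right.
case=> _ /[dup] /IHp [Mv _|-> /= <-]; left=> //.
by case: e => [[[B1 B2] x] He]; have [_ [] ] := He.
Qed.

Lemma gamma_relations_elabel : gamma_relations elabel.
Proof.
move=> u v p q Hp Hq.
suff [Mv | [-> ->] //] : v \is monic \/ p = [::] /\ q = [::].
  by apply: (monic_rreg Mv); rewrite /= -(dpath_factor Hp) -(dpath_factor Hq).
have [Mv | ->] := dpath_monic_or_nil Hp; first by left.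
by have [Mv | ->] := dpath_monic_or_nil Hq; [left | right].
Qed.

Lemma gvertex_prodXsubC_suffix {u t : seq R} :
  P = \prod_(x <- u ++ t) ('X - x%:P) ->
  gvertex P (\prod_(x <- t) ('X - x%:P)).
Proof.
move=> HP; split; first exact: monic_prod_XsubC.
  by rewrite HP !size_prod_XsubC size_cat ltnS leq_addl.
by exists (\prod_(x <- u) ('X - x%:P)); rewrite HP big_cat.
Qed.

Lemma dpath_prodXsubC_suffix {u t : seq R} :
  (forall x, x \in t -> S x) -> P = \prod_(x <- u ++ t) ('X - x%:P) ->
  exists p, dpath (\prod_(x <- t) ('X - x%:P)) p 1.
Proof.
elim: t u => [|x t IHt] u St HP; first by exists [::]; rewrite big_nil.
have HP' : P = \prod_(y <- rcons u x ++ t) ('X - y%:P) by rewrite cat_rcons.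
have St' y : y \in t -> S y by move=> ty; apply: St; rewrite in_cons ty orbT.
have [p Hp] := IHt _ St' HP'.
have He : is_gedge P S (\prod_(y <- x :: t) ('X - y%:P), \prod_(y <- t) ('X - y%:P), x).
  split; [exact: gvertex_prodXsubC_suffix HP | exact: gvertex_prodXsubC_suffix HP'|..].
    by apply: St; rewrite mem_head.
  by rewrite big_cons.
by exists (exist _ _ He :: p).
Qed.

End LabelledPaths.

Theorem theorem2p5p1 (k : fieldType) (R : algType k) (n : nat) (P : {poly R})
  (S : R -> Prop) (a : 'I_n -> R)
  (HPmonic : P \is monic) (HPsize : size P = n.+1)
  (HS : forall x, S x -> pseudo_root P x)
  (HaS : forall i, S (a i))
  (HPa : P = \prod_(i < n) ('X - (a i)%:P))
  (A : algType k) (iota : gedge P S -> A) (HA : is_A_Gamma iota) :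
  (exists p : seq (gedge P S), @dpath k R P S P p 1) /\
  exists alpha : {lrmorphism A -> R},
    (forall e : gedge P S, alpha (iota e) = elabel e) /\
    (forall p : seq (gedge P S), @dpath k R P S P p 1 ->
       map_poly alpha (path_poly iota p) = P).
Proof.
split.
  have HP : P = \prod_(x <- [::] ++ map a (enum 'I_n)) ('X - x%:P).
    by rewrite HPa big_map enumT.
  have Sa x : x \in map a (enum 'I_n) -> S x by case/mapP=> i _ ->.
  by have [p] := dpath_prodXsubC_suffix Sa HP; rewrite -HP; exists p.
have [alpha [alpha_iota _]] := HA.2 R _ gamma_relations_elabel.
exists alpha; split=> // p Hp.
rewrite map_poly_path_poly [RHS](dpath_factor Hp) mulr1.
by apply: eq_bigr => e _ /=; rewrite alpha_iota.
Qed.
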